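(* Let $m\ge 2$, $\epsilon>0$, and $\varphi_j=2^{-j}$ for $j\ge 0$. For $j=1,\dots,m$ let $\beta_j,\beta_j':[0,1]\to\mathbb{R}$ be functions such that for all $x\in[0,1]$: $\beta_j(x)^2+\beta_j'(x)^2=1$; if $0\le x\le\varphi_j$ then $\beta_j(x)^2\le\epsilon^2$; and if $2\varphi_j\le x\le 1$ then $\beta_j(x)^2\ge 1-\epsilon^2$. Define $B_j'(x)=\prod_{i=1}^{j}\beta_i'(x)$ (with $B_0'\equiv 1$) and $B_j(x)=B_{j-1}'(x)\beta_j(x)$. Then for every $j$ with $1\le j\le m-1$ and every $x\in[\varphi_j,\varphi_{j-1})$, $$B_j(x)^2+B_{j+1}(x)^2\ge 1-\mathcal{O}(j\epsilon^2).$$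
   Context: $\mathcal{O}(\cdot)$ hides an absolute constant. *)

From Stdlib Require Import Reals Lra Lia.
Open Scope R_scope.

Definition phi (j : nat) : R := / (2 ^ j).

Fixpoint Bprime (bp : nat -> R -> R) (j : nat) (x : R) : R :=
  match j with
  | O => 1
  | S k => Bprime bp k x * bp (S k) x
  end.

(* B_j(x) = B'_{j-1}(x) * beta_j(x)  (used for j >= 1) *)
Definition Bfun (b bp : nat -> R -> R) (j : nat) (x : R) : R :=
  Bprime bp (j - 1) x * b j x.

(* On [phi j, phi (j-1)) every beta_i with i < j is switched off (x <= phi i),
   so each beta'_i^2 >= 1 - eps^2 and B'_{j-1}^2 >= 1 - (j-1) eps^2, while
   beta_{j+1} is switched on (x >= phi j = 2 phi (j+1)).  Since
   B_j^2 + B_{j+1}^2 = B'_{j-1}^2 (beta_j^2 + beta'_j^2 beta_{j+1}^2) and the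
   bracket is 1 - beta'_j^2 (1 - beta_{j+1}^2) >= 1 - eps^2, the bound holds
   with constant 1. *)
From Stdlib Require Import Reals Lra Lia.
Open Scope R_scope.

Lemma phi_gt0 j : 0 < phi j.
Proof. unfold phi. apply Rinv_0_lt_compat, pow_lt; lra. Qed.

Lemma phi_le i j : (i <= j)%nat -> phi j <= phi i.
Proof.
  intros Hij. unfold phi. apply Rinv_le_contravar.
  - apply pow_lt; lra.
  - apply Rle_pow; [lra | exact Hij].
Qed.

Lemma phi_le1 j : phi j <= 1.
Proof.
  replace 1 with (phi 0) by (unfold phi; simpl; lra).
  apply phi_le; lia.
Qed.

Lemma phi_S j : phi j = 2 * phi (S j).
Proof. unfold phi. simpl. field. apply pow_nonzero. lra. Qed.

Lemma one_sub_add_le_mul p q a c :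
  p <= 1 -> q <= 1 -> 1 - a <= p -> 1 - c <= q -> 1 - (a + c) <= p * q.
Proof.
  intros Hp Hq Hap Hcq.
  assert (0 <= (1 - p) * (1 - q)) by (apply Rmult_le_pos; lra).
  nra.
Qed.

Lemma sq_compl_bounds a a' e :
  a ^ 2 + a' ^ 2 = 1 -> a ^ 2 <= e -> 1 - e <= a' ^ 2 <= 1.
Proof. intros Hsum Ha. pose proof (pow2_ge_0 a). lra. Qed.

Lemma Bprime_sq_bounds (bp : nat -> R -> R) (x e : R) (k : nat) :
  (forall i, (1 <= i <= k)%nat -> 1 - e <= bp i x ^ 2 <= 1) ->
  1 - INR k * e <= Bprime bp k x ^ 2 <= 1.
Proof.
  induction k as [|k IH]; intros Hbp; simpl Bprime.
  - simpl. lra.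
  - destruct IH as [IHlo IHhi]; [intros i Hi; apply Hbp; lia |].
    destruct (Hbp (S k) ltac:(lia)) as [Hlo Hhi].
    rewrite Rpow_mult_distr, S_INR.
    pose proof (pow2_ge_0 (Bprime bp k x)).
    pose proof (one_sub_add_le_mul _ _ _ _ IHhi Hhi IHlo Hlo).
    split; nra.
Qed.

Lemma switch_sq_bounds a a' c c' e :
  a ^ 2 + a' ^ 2 = 1 -> c ^ 2 + c' ^ 2 = 1 -> 1 - e <= c ^ 2 ->
  1 - e <= a ^ 2 + a' ^ 2 * c ^ 2 <= 1.
Proof.
  intros Ha Hc Hce.
  pose proof (pow2_ge_0 a). pose proof (pow2_ge_0 a'). pose proof (pow2_ge_0 c').
  split; nra.
Qed.

Lemma Bfun_sq_add_S (b bp : nat -> R -> R) k x :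
  Bfun b bp (S k) x ^ 2 + Bfun b bp (S (S k)) x ^ 2 =
  Bprime bp k x ^ 2 * (b (S k) x ^ 2 + bp (S k) x ^ 2 * b (S (S k)) x ^ 2).
Proof. unfold Bfun. simpl. rewrite Nat.sub_0_r. ring. Qed.

Theorem lemma8 :
  exists C : R,
  forall (m : nat) (eps : R) (b bp : nat -> R -> R),
    (2 <= m)%nat -> 0 < eps ->
    (forall (j : nat) (x : R), (1 <= j <= m)%nat -> 0 <= x <= 1 ->
        b j x ^ 2 + bp j x ^ 2 = 1 /\
        (x <= phi j -> b j x ^ 2 <= eps ^ 2) /\
        (2 * phi j <= x -> b j x ^ 2 >= 1 - eps ^ 2)) ->
    forall (j : nat) (x : R), (1 <= j <= m - 1)%nat ->
      phi j <= x < phi (j - 1) ->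
      Bfun b bp j x ^ 2 + Bfun b bp (j + 1) x ^ 2 >= 1 - C * INR j * eps ^ 2.
Proof.
  exists 1. intros m eps b bp _ _ Hbeta j x Hj [Hjx Hxj].
  destruct j as [|k]; [lia |]. rewrite Nat.sub_succ, Nat.sub_0_r in Hxj.
  assert (Hx : 0 <= x <= 1) by (pose proof (phi_gt0 (S k)); pose proof (phi_le1 k); lra).
  assert (Hoff : forall i, (1 <= i <= k)%nat -> 1 - eps ^ 2 <= bp i x ^ 2 <= 1).
  { intros i Hi. destruct (Hbeta i x ltac:(lia) Hx) as [Hsum [Hsmall _]].
    apply (sq_compl_bounds (b i x)); [exact Hsum |].
    apply Hsmall. pose proof (phi_le i k ltac:(lia)). lra. }
  destruct (Hbeta (S k) x ltac:(lia) Hx) as [Hsum _].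
  destruct (Hbeta (S (S k)) x ltac:(lia) Hx) as [Hsum' [_ Hon]].
  rewrite <- phi_S in Hon.
  destruct (Bprime_sq_bounds bp x _ k Hoff) as [HPlo HPhi].
  destruct (switch_sq_bounds _ _ _ _ (eps ^ 2) Hsum Hsum') as [HSlo HShi];
    [apply Rge_le, Hon, Hjx |].
  rewrite Nat.add_1_r, Bfun_sq_add_S, S_INR.
  pose proof (one_sub_add_le_mul _ _ _ _ HPhi HShi HPlo HSlo).
  lra.
Qed.
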